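(* Let $n\ge1$, $X=\{1,\dots,n\}$, $\mathcal{A}$ the algebra of all functions $X\to\mathbb{R}$ with pointwise operations, $\sigma:X\to X$ a bijection, $\tilde{\sigma}(f)=f\circ\sigma^{-1}$, and $\Delta$ a $\tilde{\sigma}$-derivation on $\mathcal{A}$. If an element $\sum_{k=0}^m f_kx^k$ of degree $m$ (so $f_m\neq0$) of the Ore extension $\mathcal{A}[x,\tilde{\sigma},\Delta]$ belongs to the centralizer of $\mathcal{A}$, then $f_m=0$ on $Sep^m(X)$.
   Context: A $\tilde{\sigma}$-derivation is an $\mathbb{R}$-linear map $\Delta:\mathcal{A}\to\mathcal{A}$ with $\Delta(fg)=\tilde{\sigma}(f)\Delta(g)+\Delta(f)g$. The Ore extension $\mathcal{A}[x,\tilde{\sigma},\Delta]$ is the ring generated by $\mathcal{A}$ and an element $x$ such that $1,x,x^2,\dots$ form a basis as a left $\mathcal{A}$-module and $xf=\tilde{\sigma}(f)x+\Delta(f)$ for all $f\in\mathcal{A}$. The centralizer of $\mathcal{A}$ is the set of elements commuting with every element of $\mathcal{A}$. $Sep^m(X)=\{p\in X:\sigma^m(p)\neq p\}$. *)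

From HB Require Import structures.
From mathcomp Require Import all_boot all_order all_algebra all_fingroup.
From mathcomp Require Import reals.
Set Implicit Arguments. Unset Strict Implicit. Unset Printing Implicit Defensive.
Import Order.TTheory GRing.Theory Num.Theory.
Local Open Scope ring_scope.

Definition Alg (R : realType) (n : nat) := 'I_n -> R.

Definition sigt (R : realType) (n : nat) (s : {perm 'I_n}) (f : Alg R n) : Alg R n :=
  fun p => f ((s^-1)%g p).

Definition is_sigma_derivation (R : realType) (n : nat) (s : {perm 'I_n})
    (D : Alg R n -> Alg R n) : Prop :=
  [/\ forall f g : Alg R n, D (fun p => f p + g p) = (fun p => D f p + D g p),
      forall (c : R) (f : Alg R n), D (fun p => c * f p) = (fun p => c * D f p)
    & forall f g : Alg R n,
        D (fun p => f p * g p) = (fun p => sigt s f p * D g p + D f p * g p)].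

(* Elements of the Ore extension A[x, sigma~, Delta] are represented by their
   coefficient sequence c : nat -> A (finitely supported), standing for
   sum_j c j x^j.  Left multiplication by x:
     x * (c x^j) = sigma~(c) x^{j+1} + Delta(c) x^j. *)
Definition ore_mulx (R : realType) (n : nat) (s : {perm 'I_n})
    (D : Alg R n -> Alg R n) (c : nat -> Alg R n) : nat -> Alg R n :=
  fun i p => (match i with 0%N => 0 | i'.+1 => sigt s (c i') p end) + D (c i) p.

Definition ore_xpow_mul (R : realType) (n : nat) (s : {perm 'I_n})
    (D : Alg R n -> Alg R n) (k : nat) (g : Alg R n) : nat -> Alg R n :=
  iter k (ore_mulx s D) (fun i => if i == 0%N then g else (fun _ => 0)).

(* The element sum_{k=0}^m f_k x^k commutes with every g in A:
   coefficientwise, (sum_k f_k x^k) g = g (sum_k f_k x^k). *)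
Definition in_centralizer (R : realType) (n : nat) (s : {perm 'I_n})
    (D : Alg R n -> Alg R n) (m : nat) (f : nat -> Alg R n) : Prop :=
  forall (g : Alg R n) (i : nat) (p : 'I_n),
    \sum_(k < m.+1) f k p * ore_xpow_mul s D k g i p
    = (if (i <= m)%N then g p * f i p else 0).

Definition Sep (n : nat) (s : {perm 'I_n}) (m : nat) : {set 'I_n} :=
  [set p | (s ^+ m)%g p != p].

(* Multiplying g in A on the left by x^k only produces powers up to x^k, and the
   x^k-coefficient of x^k g is sigma~^k(g).  Hence the x^m-coefficient of the
   commutation identity (sum_k f_k x^k) g = g (sum_k f_k x^k) reads
   f_m (g o sigma^-m) = g f_m.  Taking for g the indicator of a point p with
   sigma^m(p) <> p gives f_m(p) = 0. *)
From HB Require Import structures.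
From mathcomp Require Import all_boot all_order all_algebra all_fingroup.
From mathcomp Require Import boolp reals.
Set Implicit Arguments. Unset Strict Implicit. Unset Printing Implicit Defensive.
Import Order.TTheory GRing.Theory Num.Theory.
Local Open Scope ring_scope.

Lemma sigma_derivation0 (R : realType) (n : nat) (s : {perm 'I_n})
    (D : Alg R n -> Alg R n) :
  is_sigma_derivation s D -> D (fun _ => 0) = (fun _ => 0).
Proof.
case=> _ DZ _; have := DZ 0 (fun _ => 0).
have -> : (fun _ : 'I_n => (0 : R) * 0) = (fun _ => 0).
  by apply: funext => p; rewrite mul0r.
by move=> ->; apply: funext => p; rewrite mul0r.
Qed.

Lemma iter_sigt (R : realType) (n : nat) (s : {perm 'I_n}) (g : Alg R n) k p :
  iter k (sigt s) g p = g (((s ^+ k)^-1)%g p).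
Proof.
elim: k p => [|k IH] p /=; first by rewrite expg0 invg1 perm1.
by rewrite /sigt IH expgSr invMg permM.
Qed.

Section OrePowers.

Variables (R : realType) (n : nat) (s : {perm 'I_n}) (D : Alg R n -> Alg R n).
Hypothesis D0 : D (fun _ => 0) = (fun _ => 0).

Lemma ore_xpow_mul_coef_gt (g : Alg R n) k i :
  (k < i)%N -> ore_xpow_mul s D k g i = (fun _ => 0).
Proof.
elim: k i => [|k IH] [|[|i]] //= lt_ki.
apply: funext => p.
by rewrite /ore_mulx !IH // ?D0 ?(ltn_trans _ lt_ki) // /sigt addr0.
Qed.

Lemma ore_xpow_mul_coef_top (g : Alg R n) k :
  ore_xpow_mul s D k g k = iter k (sigt s) g.
Proof.
elim: k => [|k IH] //=; apply: funext => p.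
by rewrite /ore_mulx -/(ore_xpow_mul s D k g) IH ore_xpow_mul_coef_gt // D0 addr0.
Qed.

Lemma in_centralizer_lead_coef m f (g : Alg R n) p :
  in_centralizer s D m f -> f m p * g (((s ^+ m)^-1)%g p) = g p * f m p.
Proof.
move/(_ g m p); rewrite leqnn big_ord_recr /= big1 ?add0r; last first.
  by move=> k _; rewrite ore_xpow_mul_coef_gt ?mulr0.
by rewrite ore_xpow_mul_coef_top iter_sigt.
Qed.

End OrePowers.

Theorem theorem4 (R : realType) (n : nat) (hn : (0 < n)%N) (s : {perm 'I_n})
    (D : Alg R n -> Alg R n) (hD : is_sigma_derivation s D)
    (m : nat) (f : nat -> Alg R n)
    (hdeg : f m <> (fun _ => 0))
    (hcent : in_centralizer s D m f) :
  forall p : 'I_n, p \in Sep s m -> f m p = 0.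
Proof.
move=> p; rewrite inE => sep_p.
pose g : Alg R n := fun q => if q == p then 1 else 0.
have := in_centralizer_lead_coef (sigma_derivation0 hD) g p hcent.
rewrite /g eqxx; have /negbTE -> : ((s ^+ m)^-1)%g p != p.
  by apply: contra sep_p => /eqP fix_p; rewrite -{1}fix_p permKV.
by rewrite mulr0 mul1r.
Qed.
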